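(* Let $\mathcal{A}=\{1,\dots,K\}$ be a set of arms, let $a^*\in\mathcal{A}$ be a target arm, and for each $a\in\mathcal{A}$ let $m_a\geq 1$ be an integer and $\vec{y}_a\in\mathbb{R}^{m_a}$ a reward vector. For perturbations $\vec{\epsilon}_a\in\mathbb{R}^{m_a}$ put $\tilde{\mu}_a=(\vec{y}_a+\vec{\epsilon}_a)^T\mathbf{1}/m_a$, where $\mathbf{1}$ is the all-ones vector. Fix a margin $\xi>0$ and consider $$P_1:\quad \min_{\{\vec{\epsilon}_a\}_{a\in\mathcal{A}}}\ \sum_{a\in\mathcal{A}}\|\vec{\epsilon}_a\|_2^2\quad\text{s.t.}\quad \tilde{\mu}_{a^*}\geq \tilde{\mu}_a+\xi\ \ \forall a\neq a^*.$$ Then $P_1$ is a quadratic program with linear constraints and, for every reward instance $\{\vec{y}_a\}_{a\in\mathcal{A}}$, it has at least one optimal solution. Moreover, if the rewards of an $\epsilon$-greedy algorithm's data buffer are replaced by $\vec{y}_a+\vec{\epsilon}_a$ for such a solution, then at round $T+1$ the $\epsilon$-greedy algorithm pulls $a^*$ with probability at least $1-\frac{K-1}{K}\alpha_{T+1}$.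
   Context: Offline attack setting: a stochastic bandit algorithm pulls arms $a_1,\dots,a_T$ and receives rewards $r_t=\mu_{a_t}+\eta_t$ with zero-mean $\sigma$-subGaussian noise; $m_a$ is the number of rounds $t\le T$ with $a_t=a$ and $\vec{y}_a=(r_t:a_t=a)^T$. An attacker replaces each $r_t$ by $r_t+\epsilon_t$ (so arm $a$'s rewards become $\vec{y}_a+\vec{\epsilon}_a$) before the algorithm updates; $\tilde{\mu}_a$ is then the post-attack empirical mean of arm $a$. The $\epsilon$-greedy algorithm with rate function $\alpha_t\in[0,1]$ at round $t$ pulls an arm drawn uniformly from $\mathcal{A}$ with probability $\alpha_t$, and otherwise pulls $\arg\max_a$ of the current empirical means. *)

From HB Require Import structures.
From mathcomp Require Import all_boot all_order all_algebra.
From mathcomp Require Import reals.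
Set Implicit Arguments. Unset Strict Implicit. Unset Printing Implicit Defensive.
Import Order.TTheory GRing.Theory Num.Theory.
Local Open Scope ring_scope.

Definition armvecs (R : realType) (K : nat) (m : 'I_K -> nat) :=
  forall a : 'I_K, 'rV[R]_(m a).

Definition post_mean (R : realType) (K : nat) (m : 'I_K -> nat)
  (y eps : armvecs R m) (a : 'I_K) : R :=
  (\sum_(i < m a) (y a 0 i + eps a 0 i)) / (m a)%:R.

Definition attack_cost (R : realType) (K : nat) (m : 'I_K -> nat)
  (eps : armvecs R m) : R :=
  \sum_(a < K) \sum_(i < m a) (eps a 0 i) ^+ 2.

Definition P1_feasible (R : realType) (K : nat) (m : 'I_K -> nat)
  (y : armvecs R m) (astar : 'I_K) (xi : R) (eps : armvecs R m) : Prop :=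
  forall a : 'I_K, a != astar ->
    post_mean y eps astar >= post_mean y eps a + xi.

Definition P1_optimal (R : realType) (K : nat) (m : 'I_K -> nat)
  (y : armvecs R m) (astar : 'I_K) (xi : R) (eps : armvecs R m) : Prop :=
  P1_feasible y astar xi eps /\
  forall eps' : armvecs R m, P1_feasible y astar xi eps' ->
    attack_cost eps <= attack_cost eps'.

Definition is_argmax (R : realType) (K : nat) (mu : 'I_K -> R) (g : 'I_K) : Prop :=
  forall a : 'I_K, mu a <= mu g.

(* Probability that epsilon-greedy with exploration rate alpha pulls arm a,
   when its greedy choice (an arg max of the current empirical means) is g:
   uniform over the K arms with probability alpha, g with probability 1-alpha. *)
Definition eps_greedy_prob (R : realType) (K : nat) (alpha : R) (g a : 'I_K) : R :=
  alpha * (K%:R)^-1 + (1 - alpha) * (a == g)%:R.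

From HB Require Import structures.
From mathcomp Require Import all_boot all_order all_algebra.
From mathcomp Require Import reals topology normedtype ring lra.
Set Implicit Arguments. Unset Strict Implicit. Unset Printing Implicit Defensive.
Import Order.TTheory GRing.Theory Num.Theory.
Import numFieldNormedType.Exports.
Local Open Scope ring_scope.

(* By Cauchy-Schwarz, among perturbations of an arm with a prescribed mean
   shift the constant one is cheapest, so P1 reduces to choosing the mean
   shifts d_a, i.e. to minimising sum_a m_a d_a^2 under linear constraints.
   Its optimum is a water-filling: raise the target arm to a level c and lower
   every other arm a to min(mu_a, c - xi), with c chosen (intermediate value
   theorem) so that the mass added to the target balances the mass removed
   from the others.  This balance is the KKT condition with multipliers
   m_a max(0, mu_a + xi - c), whence optimality by convexity.  Any feasible
   attack makes the target the unique arg max of the empirical means, so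
   epsilon-greedy pulls it with probability (1 - alpha) + alpha / K. *)

Lemma sum_sqr_ge_mean (R : realFieldType) (n : nat) (v : 'I_n -> R) :
  (0 < n)%N -> n%:R * ((\sum_i v i) / n%:R) ^+ 2 <= \sum_i v i ^+ 2.
Proof.
move=> n_gt0; set S := \sum_i v i; set D := S / n%:R.
have SE : S = n%:R * D by rewrite /D mulrC divfK // pnatr_eq0 -lt0n.
have : 0 <= \sum_i (v i - D) ^+ 2 by apply: sumr_ge0 => i _; apply: sqr_ge0.
rewrite (eq_bigr (fun i => v i ^+ 2 - (2 * D) * v i + D ^+ 2)); last first.
  by move=> i _; ring.
rewrite big_split /= sumrB -mulr_sumr sumr_const card_ord -/S SE -mulr_natl.
by move=> ?; nra.
Qed.

Lemma argmax_margin (R : realType) (K : nat) (mu : 'I_K -> R) (astar g : 'I_K)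
    (xi : R) :
  0 < xi -> (forall a, a != astar -> mu astar >= mu a + xi) ->
  is_argmax mu g -> g = astar.
Proof.
move=> xi_gt0 margin g_max; apply/eqP/negP => /negP g_neq.
by have := margin g g_neq; have := g_max astar; lra.
Qed.

Lemma eps_greedy_prob_greedy (R : realType) (K : nat) (alpha : R) (g : 'I_K) :
  eps_greedy_prob alpha g g = 1 - (K.-1)%:R / K%:R * alpha.
Proof.
rewrite /eps_greedy_prob eqxx mulr1.
case: K g => [[] //|k] _ /=.
have k1_neq0 : k%:R + 1 != 0 :> R by rewrite natr1 pnatr_eq0.
by rewrite -natr1; field.
Qed.

Section Attack.
Variables (R : realType) (K : nat) (m : 'I_K -> nat) (y : armvecs R m).
Hypothesis m_gt0 : forall a, (0 < m a)%N.
Variables (astar : 'I_K) (xi : R).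

Local Notation M a := ((m a)%:R : R).

Lemma M_gt0 a : 0 < M a. Proof. by rewrite ltr0n. Qed.

Definition emp_mean a : R := (\sum_i y a 0 i) / M a.

Definition mean_shift (eps : armvecs R m) a : R := (\sum_i eps a 0 i) / M a.

Definition uniform_attack (d : 'I_K -> R) : armvecs R m :=
  fun a => const_mx (d a).

Lemma post_meanE eps a : post_mean y eps a = emp_mean a + mean_shift eps a.
Proof. by rewrite /post_mean big_split /= mulrDl. Qed.

Lemma attack_cost_ge eps :
  \sum_a M a * mean_shift eps a ^+ 2 <= attack_cost eps.
Proof. by apply: ler_sum => a _; exact: sum_sqr_ge_mean. Qed.

Lemma mean_shift_uniform d a : mean_shift (uniform_attack d) a = d a.
Proof.
rewrite /mean_shift (eq_bigr (fun _ => d a)) => [|i _]; last by rewrite mxE.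
by rewrite sumr_const card_ord -[d a *+ _]mulr_natr mulfK // gt_eqF ?M_gt0.
Qed.

Lemma attack_cost_uniform d :
  attack_cost (uniform_attack d) = \sum_a M a * d a ^+ 2.
Proof.
apply: eq_bigr => a _.
rewrite (eq_bigr (fun _ => d a ^+ 2)) => [|i _]; last by rewrite mxE.
by rewrite sumr_const card_ord mulr_natl.
Qed.

Definition excess c a : R := Num.max 0 (emp_mean a + xi - c).

Definition level_shift c a : R :=
  if a == astar then c - emp_mean astar else - excess c a.

Definition level_gap c : R :=
  M astar * (c - emp_mean astar) - \sum_(a | a != astar) M a * excess c a.

Lemma excess_ge0 c a : 0 <= excess c a. Proof. by rewrite le_max lexx. Qed.

Lemma excess_ge c a : emp_mean a + xi - c <= excess c a.
Proof. by rewrite le_max lexx orbT. Qed.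

Lemma level_shift_feasible c :
  P1_feasible y astar xi (uniform_attack (level_shift c)).
Proof.
move=> a a_neq.
rewrite !post_meanE !mean_shift_uniform /level_shift eqxx (negbTE a_neq).
by have := excess_ge c a; lra.
Qed.

(* Complementary slackness: a binding arm ([excess c a > 0]) sits exactly xi
   below the level c, so no feasible attack can close the gap further. *)
Lemma level_shift_slack c eps a :
  P1_feasible y astar xi eps -> a != astar ->
  0 <= excess c a * ((mean_shift eps astar - level_shift c astar)
                     - (mean_shift eps a - level_shift c a)).
Proof.
move=> feas a_neq; have := feas a a_neq.
rewrite !post_meanE /level_shift eqxx (negbTE a_neq) /excess.
case: (lerP 0 (emp_mean a + xi - c)) => [binding|_]; last by rewrite mul0r.
by move=> ?; apply: mulr_ge0 => //; lra.
Qed.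

Lemma level_shift_first_order c eps :
  level_gap c = 0 -> P1_feasible y astar xi eps ->
  0 <= \sum_a M a * level_shift c a * (mean_shift eps a - level_shift c a).
Proof.
move=> gap0 feas; rewrite (bigD1 astar) //=.
have -> : M astar * level_shift c astar
          = \sum_(a | a != astar) M a * excess c a.
  by rewrite /level_shift eqxx; move: gap0; rewrite /level_gap; lra.
rewrite mulr_suml -big_split /=; apply: sumr_ge0 => a a_neq.
have := level_shift_slack c feas a_neq; have := M_gt0 a.
by rewrite /level_shift (negbTE a_neq); nra.
Qed.

Lemma level_shift_optimal c :
  level_gap c = 0 -> P1_optimal y astar xi (uniform_attack (level_shift c)).
Proof.
move=> gap0; split=> [|eps feas]; first exact: level_shift_feasible.
rewrite attack_cost_uniform; apply: le_trans (attack_cost_ge eps).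
set d := mean_shift eps; set l := level_shift c.
have convex a :
    M a * l a ^+ 2 + 2 * (M a * l a * (d a - l a)) <= M a * d a ^+ 2.
  have := M_gt0 a; have := sqr_ge0 (d a - l a); nra.
have := level_shift_first_order gap0 feas; rewrite -/d -/l => first_order.
apply: le_trans (ler_sum _ (fun a _ => convex a)).
by rewrite big_split /= -mulr_sumr lerDl mulr_ge0.
Qed.

Lemma level_gap_continuous : continuous level_gap.
Proof.
move=> c; apply: cvgB.
  by apply: cvgMl_tmp; apply: cvgB; [exact: cvg_id | exact: cvg_cst].
apply: cvg_big => // [|a _]; first exact: add_continuous.
apply: cvgMl_tmp.
apply: (@continuous_max _ R^o (fun=> 0) (fun c => emp_mean a + xi - c)).
  exact: cvg_cst.
by apply: cvgB; [exact: cvg_cst | exact: cvg_id].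
Qed.

Lemma level_gap_root : exists c, level_gap c = 0.
Proof.
pose lo := emp_mean astar; pose S := \sum_(a | a != astar) excess lo a.
have S_ge0 : 0 <= S by apply: sumr_ge0 => a _; apply: excess_ge0.
have gap_lo : level_gap lo <= 0.
  rewrite /level_gap subrr mulr0 sub0r oppr_le0; apply: sumr_ge0 => a _.
  by apply: mulr_ge0; [exact: ltW (M_gt0 a) | exact: excess_ge0].
have gap_hi : 0 <= level_gap (lo + S).
  rewrite /level_gap big1 ?subr0 => [|a a_neq].
    by rewrite addrC addKr mulr_ge0 ?ler0n.
  have excess_le : excess lo a <= S.
    by rewrite /S (bigD1 a) //= lerDl sumr_ge0 // => *; exact: excess_ge0.
  have below : emp_mean a + xi - (lo + S) <= 0 by have := excess_ge lo a; lra.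
  by rewrite /excess (max_l below) mulr0.
have [|||c _ gap0] := @IVT _ level_gap lo (lo + S) 0.
- by rewrite lerDl.
- exact/continuous_subspaceT/level_gap_continuous.
- by rewrite ge_min le_max gap_lo gap_hi orbT.
by exists c.
Qed.

End Attack.

Theorem theorem1 (R : realType) (K : nat) (astar : 'I_K)
  (m : 'I_K -> nat) (hm : forall a : 'I_K, (0 < m a)%N)
  (y : armvecs R m) (xi : R) (hxi : 0 < xi)
  (alpha : R) (ha0 : 0 <= alpha) (ha1 : alpha <= 1) :
  (exists eps : armvecs R m, P1_optimal y astar xi eps) /\
  (forall eps : armvecs R m, P1_optimal y astar xi eps ->
     forall g : 'I_K, is_argmax (post_mean y eps) g ->
       eps_greedy_prob alpha g astar >= 1 - (K.-1)%:R / K%:R * alpha).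
Proof.
split=> [|eps [feas _] g g_max].
  have [c gap0] := level_gap_root y hm astar xi.
  exists (uniform_attack m (level_shift y astar xi c)).
  exact: level_shift_optimal.
by rewrite -(argmax_margin hxi feas g_max) eps_greedy_prob_greedy.
Qed.
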